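(* Let $G$ be a digraph and let $\alpha^{(n+1)}>\gamma^{(n)}>\beta^{(n-1)}$ be allowed elementary paths on $G$ (of lengths $n+1,n,n-1$) which all have the same starting vertex and all have the same end vertex. Write $\alpha=v_0v_1\cdots v_{n+1}$. Then either (a) there exists an allowed elementary $n$-path $\gamma'\neq\gamma$ with $\alpha>\gamma'>\beta$; or (b) $\beta$ is obtained from $\alpha$ by removing two subsequent vertices $v_i\to v_{i+1}$ with $1\le i\le n-1$.
   Context: A digraph $G=(V,E)$ consists of a set $V$ and $E\subseteq(V\times V)\setminus\{(v,v)\}$; $(u,v)\in E$ is written $u\to v$. An allowed elementary $n$-path is a sequence $v_0\cdots v_n$ of vertices with $v_{i-1}\to v_i\in E$ for $1\le i\le n$. For allowed elementary paths, $\gamma'<\gamma$ (equivalently $\gamma>\gamma'$) means $\gamma'$ is obtained from $\gamma$ by deleting some of its entries. *)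

From mathcomp Require Import all_boot.
Set Implicit Arguments. Unset Strict Implicit. Unset Printing Implicit Defensive.

(* A digraph is given by a vertex type V and an edge relation E : V -> V -> Prop
   (E u v means u -> v); irreflexivity of E is a hypothesis of the theorem. *)

Fixpoint chain (V : Type) (E : V -> V -> Prop) (x : V) (s : seq V) : Prop :=
  match s with
  | [::] => True
  | y :: s' => E x y /\ chain E y s'
  end.

(* allowed elementary n-path v_0 v_1 ... v_n, represented as the sequence
   of its n+1 vertices *)
Definition allowed_path (V : Type) (E : V -> V -> Prop) (n : nat) (p : seq V) : Prop :=
  match p with
  | [::] => False
  | x :: s => size s = n /\ chain E x s
  end.

From mathcomp Require Import all_boot zify.
Set Implicit Arguments. Unset Strict Implicit. Unset Printing Implicit Defensive.

(* Deleting one vertex of alpha gives gamma and one more gives beta, so beta is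
   alpha with two positions a < b deleted; both are interior, because E is
   irreflexive and the endpoints are kept.  If b = a + 1 we are in case (b).
   Otherwise the edges of beta bridge each deleted vertex on its own,
   v_(a-1) -> v_(a+1) and v_(b-1) -> v_(b+1), so deleting only v_a or only v_b
   from alpha gives two allowed n-paths between alpha and beta.  They differ at
   position a, where one has v_(a+1) and the other v_a <> v_(a+1); gamma is one
   of them and the other is gamma'. *)

Section RemAt.
Variable T : Type.

Definition rem_at k (s : seq T) := take k s ++ drop k.+1 s.

Lemma size_rem_at k s : k < size s -> size (rem_at k s) = (size s).-1.
Proof. by move=> ks; rewrite size_cat size_take size_drop ks; lia. Qed.

Lemma nth_rem_at x0 k s i : nth x0 (rem_at k s) i = nth x0 s (bump k i).
Proof.
rewrite nth_cat size_take /bump; have [ks|sk] := ltnP k (size s).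
  have [ik|ki] := ltnP i k; first by rewrite nth_take ?add0n.
  by rewrite nth_drop add1n; congr nth; lia.
have [i_s|s_i] := ltnP i (size s).
  by rewrite nth_take ?[k <= i]leqNgt (leq_trans i_s sk).
by rewrite !nth_default ?size_drop //; lia.
Qed.

Lemma rem_atC a b s : a < b < size s -> rem_at a (rem_at b s) = rem_at b.-1 (rem_at a s).
Proof.
case: s => [//|x s] /andP[ab /= bs].
apply: (@eq_from_nth _ x) => [|i _]; first by rewrite !size_rem_at ?size_rem_at //=; lia.
rewrite !nth_rem_at /bump; congr nth; lia.
Qed.

Lemma rem_at_rem_atS a s : rem_at a (rem_at a.+1 s) = take a s ++ drop a.+2 s.
Proof.
rewrite /rem_at; have [a_s|s_a] := ltnP a.+1 (size s).
  rewrite takel_cat ?size_take ?a_s // take_takel //.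
  by rewrite drop_cat size_take a_s ltnn subnn drop0.
rewrite [drop a.+2 s]drop_oversize ?cats0; last exact: ltnW.
by rewrite [take a.+1 s]take_oversize // (drop_oversize s_a) cats0.
Qed.
End RemAt.

Lemma rem_at_subseq (T : eqType) k (s : seq T) : subseq (rem_at k s) s.
Proof.
rewrite -[s in subseq _ s](cat_take_drop k) cat_subseq //.
by rewrite -[k.+1]addn1 addnC -drop_drop drop_subseq.
Qed.

Lemma subseq_rem_at (T : eqType) (s1 s2 : seq T) :
  subseq s1 s2 -> size s2 = (size s1).+1 -> exists2 k, k < size s2 & s1 = rem_at k s2.
Proof.
elim: s2 s1 => [|x s2 IH] [|y s1] //=.
  by move=> _ /eqP; rewrite eqSS => /nilP ->; exists 0.
case: eqP => [<- sub12 [sz12]|_ sub12 sz12].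
  by have [k ks ->] := IH _ sub12 sz12; exists k.+1.
exists 0 => //; rewrite /rem_at /= drop0.
by apply/eqP; rewrite -(size_subseq_leqif sub12).2 /=; case: sz12 => ->.
Qed.

Section AllowedPaths.
Variables (V : Type) (E : V -> V -> Prop) (x0 : V).

Lemma chain_nth x s :
  chain E x s <-> forall i, i < size s -> E (nth x0 (x :: s) i) (nth x0 (x :: s) i.+1).
Proof.
elim: s x => [|y s IH] x /=; first by split => // _ [].
split=> [[Exy /IH Es] [|i] //= /Es //|Es]; split; first exact: (Es 0).
by apply/IH => i; apply: (Es i.+1).
Qed.

Lemma allowed_pathP n p : allowed_path E n p <->
  size p = n.+1 /\ forall i, i < n -> E (nth x0 p i) (nth x0 p i.+1).
Proof.
case: p => [|x s] /=; first by split=> [|[]].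
by split=> [[<- /chain_nth]|[[<-] /chain_nth]].
Qed.

Lemma size_allowed_path n p : allowed_path E n p -> size p = n.+1.
Proof. by case: p => // x s [<-]. Qed.

Lemma allowed_path_rem_at n s k : allowed_path E n.+1 s -> 0 < k <= n ->
  E (nth x0 s k.-1) (nth x0 s k.+1) -> allowed_path E n (rem_at k s).
Proof.
move=> /allowed_pathP[sz Es] /andP[k_gt0 k_le] Ek; apply/allowed_pathP.
split=> [|i i_lt]; first by rewrite size_rem_at sz //; lia.
rewrite !nth_rem_at; have [ik|ki|ik] := ltngtP i.+1 k.
- have [-> ->] : bump k i = i /\ bump k i.+1 = i.+1 by rewrite /bump; lia.
  by apply: Es; lia.
- have [-> ->] : bump k i = i.+1 /\ bump k i.+1 = i.+2 by rewrite /bump; lia.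
  exact: Es.
- by move: Ek; rewrite -ik /bump ltnn leqnn.
Qed.

Lemma allowed_path_rem_at_edge n s k : allowed_path E n (rem_at k s) -> 0 < k <= n ->
  E (nth x0 s k.-1) (nth x0 s k.+1).
Proof.
move=> /allowed_pathP[_ Er] /andP[k_gt0 k_le].
have /Er : k.-1 < n by lia.
rewrite !nth_rem_at.
by have [-> ->] : bump k k.-1 = k.-1 /\ bump k k.-1.+1 = k.+1 by rewrite /bump; lia.
Qed.

Hypothesis E_irrefl : forall v, ~ E v v.

Lemma rem_at_interior n s k : allowed_path E n.+1 s -> k < n.+2 ->
  head x0 s = head x0 (rem_at k s) -> last x0 s = last x0 (rem_at k s) -> 0 < k <= n.
Proof.
move=> Hs k_lt; have [sz Es] := (allowed_pathP n.+1 s).1 Hs.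
rewrite -!nth0 -!nth_last size_rem_at sz // !nth_rem_at /= => s_0 s_last.
have [k0|k_gt0] := posnP k.
  by move: (Es 0 isT); rewrite {1}s_0 k0 => /E_irrefl.
rewrite /= leqNgt; apply/negP => n_lt_k.
move: s_last; have -> : k = n.+1 by lia.
rewrite /bump ltnn => s_last.
by move: (Es n (ltnSn n)); rewrite s_last => /E_irrefl.
Qed.

Lemma rem_at_neq s a b : a < b -> E (nth x0 s a) (nth x0 s a.+1) -> rem_at a s <> rem_at b s.
Proof.
move=> ab Ea /(congr1 (nth x0 ^~ a)); rewrite !nth_rem_at /bump leqnn leqNgt ab /= => e.
by move: Ea; rewrite -e => /E_irrefl.
Qed.
End AllowedPaths.

Section RemovalPairs.
Variables (V : eqType) (E : V -> V -> Prop).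
Hypothesis E_irrefl : forall v, ~ E v v.

Lemma allowed_path_rem_at_pair n s a b :
  allowed_path E n.+2 s -> 0 < a -> a.+1 < b <= n.+1 ->
  allowed_path E n (rem_at a (rem_at b s)) ->
  allowed_path E n.+1 (rem_at a s) /\ allowed_path E n.+1 (rem_at b s).
Proof.
move=> Hs a_gt0 /andP[ab b_le] Hab; have sz := size_allowed_path Hs.
have x0 : V by case: s Hs {sz Hab} => [[]|x].
have edge_a : E (nth x0 s a.-1) (nth x0 s a.+1).
  have /(allowed_path_rem_at_edge x0 Hab) : 0 < a <= n by lia.
  rewrite !nth_rem_at.
  by have [-> ->] : bump b a.-1 = a.-1 /\ bump b a.+1 = a.+1 by rewrite /bump; lia.
have edge_b : E (nth x0 s b.-1) (nth x0 s b.+1).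
  rewrite rem_atC ?sz in Hab; last lia.
  have /(allowed_path_rem_at_edge x0 Hab) : 0 < b.-1 <= n by lia.
  rewrite !nth_rem_at.
  by have [-> ->] : bump a b.-1.-1 = b.-1 /\ bump a b.-1.+1 = b.+1 by rewrite /bump; lia.
by split; [apply: (allowed_path_rem_at Hs _ edge_a) | apply: (allowed_path_rem_at Hs _ edge_b)];
  lia.
Qed.

Lemma rem_at_pair_alternative n s g a b :
  allowed_path E n.+2 s -> 0 < a < b -> b <= n.+1 ->
  g = rem_at a s \/ g = rem_at b s -> allowed_path E n (rem_at a (rem_at b s)) ->
  (exists g', allowed_path E n.+1 g' /\ g' <> g /\
     subseq g' s /\ subseq (rem_at a (rem_at b s)) g')
  \/ (exists i, 1 <= i <= n /\ rem_at a (rem_at b s) = take i s ++ drop i.+2 s).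
Proof.
move=> Hs /andP[a_gt0 ab] b_le g_ab Hab.
have [b_eq|b_ne] := eqVneq b a.+1.
  by right; exists a; rewrite b_eq rem_at_rem_atS; split=> //; lia.
have [Hsa Hsb] : allowed_path E n.+1 (rem_at a s) /\ allowed_path E n.+1 (rem_at b s).
  by apply: allowed_path_rem_at_pair => //; lia.
have x0 : V by case: s Hs {g_ab Hab Hsa Hsb} => [[]|x].
have [sz Es] := (allowed_pathP E x0 _ _).1 Hs.
have ne_ab : rem_at a s <> rem_at b s by apply: rem_at_neq => //; apply: Es; lia.
have ne_ba : rem_at b s <> rem_at a s by move/esym.
have sub_a : subseq (rem_at a (rem_at b s)) (rem_at a s).
  by rewrite rem_atC ?rem_at_subseq ?sz //; lia.
left; case: g_ab => ->; [exists (rem_at b s) | exists (rem_at a s)];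
  by rewrite !rem_at_subseq.
Qed.
End RemovalPairs.

Theorem lemma2p1 (V : eqType) (E : V -> V -> Prop)
  (Hirr : forall v : V, ~ E v v)
  (n : nat) (Hn : 1 <= n)
  (alpha gamma beta : seq V) (x0 : V)
  (Ha : allowed_path E n.+1 alpha)
  (Hg : allowed_path E n gamma)
  (Hb : allowed_path E n.-1 beta)
  (Hag : subseq gamma alpha) (Hgb : subseq beta gamma)
  (Hstart1 : head x0 alpha = head x0 gamma) (Hstart2 : head x0 gamma = head x0 beta)
  (Hend1 : last x0 alpha = last x0 gamma) (Hend2 : last x0 gamma = last x0 beta) :
  (exists gamma' : seq V, allowed_path E n gamma' /\ gamma' <> gamma /\
       subseq gamma' alpha /\ subseq beta gamma')
  \/
  (exists i : nat, 1 <= i <= n.-1 /\ beta = take i alpha ++ drop i.+2 alpha).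
Proof.
case: n Hn Ha Hg Hb => // n _ Ha Hg Hb.
have [sz_a sz_g] := (size_allowed_path Ha, size_allowed_path Hg).
have [k k_lt gammaE] : exists2 k, k < n.+3 & gamma = rem_at k alpha.
  by rewrite -sz_a; apply: subseq_rem_at; rewrite ?sz_a ?sz_g.
have [j j_lt betaE] : exists2 j, j < n.+2 & beta = rem_at j gamma.
  by rewrite -sz_g; apply: subseq_rem_at; rewrite ?sz_g ?(size_allowed_path Hb).
subst gamma beta.
have /andP[k_gt0 k_le] := rem_at_interior Hirr Ha k_lt Hstart1 Hend1.
have /andP[j_gt0 j_le] := rem_at_interior Hirr Hg j_lt Hstart2 Hend2.
have [jk|kj] := ltnP j k.
  by apply: (rem_at_pair_alternative Hirr Ha _ _ (or_intror erefl)) => //; lia.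
have betaE : rem_at j (rem_at k alpha) = rem_at k (rem_at j.+1 alpha).
  by rewrite [RHS]rem_atC ?sz_a //; lia.
rewrite betaE in Hb *.
by apply: (rem_at_pair_alternative Hirr Ha _ _ (or_introl erefl)) => //; lia.
Qed.
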